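(* The matrix $J^{-1}(s^* )$ satisfies $|J^{-1}_{11}(s^* )|\ge\frac13$, and $J^{-1}_{ii}(s^* )<0$ for all $i=1,\dots,b$.
   Context: Let $N\ge1$, $\gamma\in(0,1]$, $\alpha>0$, $\lambda=1-\gamma/N^\alpha$, and $b\ge1$ an integer. The mean-field vector field is $f_k(s)=\lambda(s_{k-1}^2-s_k^2)-(s_k-s_{k+1})$, $k=1,\dots,b$, with $s_0=1,s_{b+1}=0$; $s^*$ is its unique equilibrium in $\{s\in\mathbb R^b:1\ge s_1\ge\cdots\ge s_b\ge0\}$. $J(s^* )$ is the $b\times b$ tridiagonal Jacobian of $f$ at $s^*$ with $J_{kk}=-2\lambda s^*_k-1$, $J_{k,k+1}=1$, $J_{k+1,k}=2\lambda s^*_k$; it is invertible. *)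

From mathcomp Require Import all_boot all_order all_algebra.
From mathcomp Require Import all_classical all_reals all_analysis.
Set Implicit Arguments. Unset Strict Implicit. Unset Printing Implicit Defensive.
Import Order.TTheory GRing.Theory Num.Theory.
Local Open Scope ring_scope.

Definition lam {R : realType} (N : nat) (gamma alpha : R) : R :=
  1 - gamma / (N%:R `^ alpha).

(* mean-field vector field component k, with s : nat -> R the extended
   sequence (s 0 = 1, s (b+1) = 0 imposed separately) *)
Definition fk {R : realType} (l : R) (s : nat -> R) (k : nat) : R :=
  l * (s k.-1 ^+ 2 - s k ^+ 2) - (s k - s k.+1).

(* Jacobian at s; 0-based row/column i corresponds to k = i+1 *)
Definition Jac {R : realType} (b : nat) (l : R) (s : nat -> R) : 'M[R]_b :=
  \matrix_(i < b, j < b)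
    if i == j then - (2 * l * s i.+1) - 1
    else if (j : nat) == i.+1 then 1
    else if (i : nat) == j.+1 then 2 * l * s j.+1
    else 0.

Definition is_ordered_equilibrium {R : realType} (b : nat) (l : R)
    (s : nat -> R) : Prop :=
  s 0%N = 1 /\ s b.+1 = 0 /\
  (forall k, (1 <= k <= b)%N -> fk l s k = 0) /\
  (s 1%N <= 1 /\ (forall k, (1 <= k < b)%N -> s k.+1 <= s k) /\ 0 <= s b).

(* At the equilibrium s, c_k = 2 lambda s_k lies in [0, 2] and the Jacobian J
   is tridiagonal with diagonal -(c_k + 1), superdiagonal 1 and subdiagonal
   c_k.  Its inverse can be written down explicitly: for a row y of J^-1, the
   increments z_k = y_k - y_(k+1) satisfy a first-order recurrence whose
   solution is built from products of the c_k.  The diagonal entry of row i is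
   -A B / (T A + B) with A, B >= 1 and T >= 0 (sums and products of the c_k),
   hence negative; for i = 1 one has A = 1 and T <= c_1 B, so its modulus is
   at least 1 / (1 + c_1) >= 1 / 3. *)

From mathcomp Require Import all_boot all_order all_algebra.
From mathcomp Require Import all_classical all_reals all_analysis.
From mathcomp Require Import ring lra zify.
Set Implicit Arguments. Unset Strict Implicit. Unset Printing Implicit Defensive.
Import Order.TTheory GRing.Theory Num.Theory.
Local Open Scope ring_scope.

Lemma sum_nat_eq_if (R : nmodType) (n k : nat) (g : nat -> R) :
  \sum_(0 <= j < n) (if j == k then g j else 0) = if (k < n)%N then g k else 0.
Proof.
elim: n => [|n IH]; first by rewrite big_geq.
rewrite big_nat_recr //= IH.
case: (ltngtP k n) => [hkn|hnk|->].
- by rewrite addr0 ltnS ltnW.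
- by rewrite addr0 ltnS leqNgt hnk.
- by rewrite ltnSn add0r.
Qed.

Section TridiagonalInverse.
Variable R : realFieldType.
Variable b : nat.
Variable c : nat -> R.

Definition tridiag : 'M[R]_b := \matrix_(i < b, j < b)
  if i == j then - c i.+1 - 1
  else if (j : nat) == i.+1 then 1
  else if (i : nat) == j.+1 then c j.+1
  else 0.

Lemma sum_mul_tridiag (f : nat -> R) (m : 'I_b) : f 0%N = 0 -> f b.+1 = 0 ->
  \sum_(j < b) f j.+1 * tridiag j m = f m - f m.+1 - c m.+1 * (f m.+1 - f m.+2).
Proof.
move=> f0 fb; have hm := ltn_ord m.
have -> : \sum_(j < b) f j.+1 * tridiag j m =
    \sum_(0 <= j < b) ((if j.+1 == m then f j.+1 else 0)
      + (if j == m then - (c m.+1 + 1) * f j.+1 else 0)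
      + (if j == m.+1 then c m.+1 * f j.+1 else 0)).
  rewrite big_mkord; apply: eq_bigr => j _; rewrite mxE -val_eqE /=.
  case: (eqVneq (j : nat) m) => [->|hjm].
    by rewrite (gtn_eqF (ltnSn m)) (ltn_eqF (ltnSn m)); ring.
  case: (eqVneq (m : nat) j.+1) => [->|hmj].
    by rewrite (ltn_eqF (leqnSn j.+1)); ring.
  by case: ifP => _; ring.
rewrite !big_split /= !sum_nat_eq_if hm.
have -> : \sum_(0 <= j < b) (if j.+1 == m then f j.+1 else 0) = f m.
  case: (nat_of_ord m) hm => [|k] hk.
    by rewrite big1 // => j _; rewrite f0; case: ifP.
  by under eq_bigr do rewrite eqSS; rewrite sum_nat_eq_if ltnW.
case: ifP => [_|hmb]; first ring.
have -> : m.+2 = b.+1 by lia.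
by rewrite fb; ring.
Qed.

Hypothesis c_ge0 : forall k, (0 < k <= b)%N -> 0 <= c k.

Definition cprod (m n : nat) : R := \prod_(m <= k < n) c k.
Definition lsum (i : nat) : R := \sum_(0 <= k < i) cprod k.+1 i.
Definition rsum (i : nat) : R := \sum_(i <= k < b.+1) cprod k.+1 b.+1.
Definition rcoef (i : nat) : R := - lsum i / (cprod i b.+1 * lsum i + rsum i).
Definition lcoef (i : nat) : R := 1 + rcoef i * cprod i b.+1.

(* Row [i] of the inverse is [y = inv_row i], extended by [y_0 = y_(b+1) = 0],
   and [incr i k = y_k - y_(k+1)].  The equation [y J = e_i] reads
   [incr i (k-1) - c_k * incr i k = (k == i)]; the boundary condition
   [y_0 = 0] fixes [rcoef i], and the jump at [i] fixes [lcoef i]. *)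
Definition incr (i k : nat) : R :=
  if (k < i)%N then lcoef i * cprod k.+1 i else rcoef i * cprod k.+1 b.+1.
Definition inv_row (i j : nat) : R := \sum_(j <= k < b.+1) incr i k.
Definition tridiag_inv : 'M[R]_b := \matrix_(i < b, j < b) inv_row i.+1 j.+1.

Lemma cprod_ge0 m n : (0 < m)%N -> (n <= b.+1)%N -> 0 <= cprod m n.
Proof.
move=> m_gt0 n_le; rewrite /cprod big_nat_cond.
by apply: prodr_ge0 => k /andP[/andP[? ?] _]; apply: c_ge0; lia.
Qed.

Lemma cprod_nil m : cprod m m = 1.
Proof. by rewrite /cprod big_geq. Qed.

Lemma cprod_recl m n : (m < n)%N -> cprod m n = c m * cprod m.+1 n.
Proof. by move=> lt_mn; rewrite /cprod big_ltn. Qed.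

Lemma lsum_ge1 i : (0 < i <= b)%N -> 1 <= lsum i.
Proof.
case: i => [|i] /andP[// _ le_ib]; rewrite /lsum big_nat_recr //= cprod_nil lerDr.
by apply: sumr_ge0 => k _; apply: cprod_ge0; rewrite // leqW.
Qed.

Lemma rsum_ge1 i : (i <= b)%N -> 1 <= rsum i.
Proof.
move=> le_ib; rewrite /rsum big_nat_recr //= cprod_nil lerDr.
by apply: sumr_ge0 => k _; apply: cprod_ge0.
Qed.

Lemma inv_den_gt0 i : (0 < i <= b)%N -> 0 < cprod i b.+1 * lsum i + rsum i.
Proof.
move=> /[dup] hi /andP[i_gt0 le_ib].
have A_ge1 := lsum_ge1 hi; have B_ge1 := rsum_ge1 le_ib.
have := mulr_ge0 (cprod_ge0 i_gt0 (leqnn _)) (le_trans ler01 A_ge1); lra.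
Qed.

Lemma inv_row_last i : inv_row i b.+1 = 0.
Proof. by rewrite /inv_row big_geq. Qed.

Lemma inv_row_step i j : (j <= b)%N -> inv_row i j = incr i j + inv_row i j.+1.
Proof. by move=> le_jb; rewrite /inv_row big_ltn. Qed.

Lemma inv_row_diag i : inv_row i i = rcoef i * rsum i.
Proof.
rewrite /inv_row /rsum mulr_sumr big_nat_cond [RHS]big_nat_cond.
by apply: eq_bigr => k /andP[/andP[le_ik _] _]; rewrite /incr ltnNge le_ik.
Qed.

Lemma inv_row_first i : (0 < i <= b)%N -> inv_row i 0 = 0.
Proof.
move=> hi; have := inv_den_gt0 hi; case/andP: hi => _ le_ib den_gt0.
rewrite /inv_row (big_cat_nat _ (n := i)) ?leqW //= -/(inv_row i i) inv_row_diag.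
have -> : \sum_(0 <= k < i) incr i k = lcoef i * lsum i.
  rewrite /lsum mulr_sumr big_nat_cond [RHS]big_nat_cond.
  by apply: eq_bigr => k /andP[/andP[_ lt_ki] _]; rewrite /incr lt_ki.
by rewrite /lcoef /rcoef; field; lra.
Qed.

Lemma incr_jump i k : (k < b)%N -> incr i k - c k.+1 * incr i k.+1 = (k.+1 == i)%:R.
Proof.
move=> lt_kb; rewrite /incr.
case: (ltngtP k.+1 i) => cmp /=.
- by rewrite (cprod_recl cmp); ring.
- by rewrite (cprod_recl (m := k.+1)) //; ring.
- by rewrite -cmp cprod_nil /lcoef (cprod_recl (m := k.+1)) //; ring.
Qed.

Lemma tridiag_inv_mul : tridiag_inv *m tridiag = 1%:M.
Proof.
apply/matrixP => i m; rewrite !mxE.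
have hi : (0 < i.+1 <= b)%N by rewrite ltn_ord.
under eq_bigr do rewrite mxE.
rewrite (sum_mul_tridiag (f := inv_row i.+1)) ?inv_row_first ?inv_row_last //.
have lt_mb := ltn_ord m.
rewrite (inv_row_step i.+1 (ltnW lt_mb)) (inv_row_step i.+1 lt_mb).
rewrite -[i == m]eq_sym -val_eqE /= -eqSS -(incr_jump _ lt_mb); ring.
Qed.

Lemma invmx_tridiag : invmx tridiag = tridiag_inv.
Proof.
have [_ unitJ] := mulmx1_unit tridiag_inv_mul.
by rewrite -[RHS](mulmxK unitJ) tridiag_inv_mul mul1mx.
Qed.

Lemma inv_row_diag_lt0 i : (0 < i <= b)%N -> inv_row i i < 0.
Proof.
move=> /[dup] hi /andP[_ le_ib]; have := inv_den_gt0 hi.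
have := lsum_ge1 hi; have := rsum_ge1 le_ib => ? ? ?.
rewrite inv_row_diag /rcoef !mulNr oppr_lt0.
by apply: mulr_gt0; [apply: divr_gt0 |]; lra.
Qed.

(* [|y_11| = B / (c_1 P + B)] with [P = cprod 2 b.+1 <= B = rsum 1]. *)
Lemma inv_row11_ge : (0 < b)%N -> (1 + c 1)^-1 <= `|inv_row 1 1|.
Proof.
move=> b_gt0; have hi : (0 < 1 <= b)%N by rewrite b_gt0.
have lsum1 : lsum 1 = 1 by rewrite /lsum big_nat1 cprod_nil.
have P_le : cprod 2 b.+1 <= rsum 1.
  by rewrite /rsum big_ltn // lerDl; apply: sumr_ge0 => k _; apply: cprod_ge0.
have := inv_den_gt0 hi; have := rsum_ge1 b_gt0; have := c_ge0 hi.
rewrite inv_row_diag /rcoef lsum1 (cprod_recl (b_gt0 : (1 < b.+1)%N)) mulr1.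
move=> c1_ge0 B_ge1 den_gt0.
rewrite !mulNr mul1r normrN ger0_norm ?mulr_ge0 ?invr_ge0 ?(ltW den_gt0) //; last lra.
rewrite mulrC ler_pdivlMr // mulrC ler_pdivrMr; last lra.
have := ler_wpM2l c1_ge0 P_le; lra.
Qed.
End TridiagonalInverse.

Lemma lam_ge0_le1 (R : realType) (N : nat) (gamma alpha : R) :
  (1 <= N)%N -> 0 < gamma -> gamma <= 1 -> 0 < alpha ->
  0 <= lam N gamma alpha <= 1.
Proof.
move=> N_ge1 gamma_gt0 gamma_le1 alpha_gt0.
have Npow_ge1 : 1 <= N%:R `^ alpha.
  by rewrite -[X in X <= _](powRr0 N%:R) ler_powR ?ler1n // ltW.
have : gamma / N%:R `^ alpha <= gamma by rewrite ler_pdivrMr; nra.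
have : 0 <= gamma / N%:R `^ alpha by apply: divr_ge0; lra.
by rewrite /lam => ? ?; apply/andP; split; lra.
Qed.

Lemma nonincreasing_le (R : realFieldType) (s : nat -> R) (b m n : nat) :
  (forall k, (1 <= k < b)%N -> s k.+1 <= s k) ->
  (1 <= m <= n)%N -> (n <= b)%N -> s n <= s m.
Proof.
move=> s_noninc; elim: n => [|n IH] le_mn le_nb; first lia.
have [-> //|ne_mn] := eqVneq m n.+1.
by apply: le_trans (s_noninc n _) (IH _ _); lia.
Qed.

Lemma ordered_equilibrium_bounds (R : realType) (b : nat) (l : R) (s : nat -> R) :
  is_ordered_equilibrium b l s -> forall k, (0 < k <= b)%N -> 0 <= s k <= 1.
Proof.
move=> [_ [_ [_ [s1_le1 [s_noninc sb_ge0]]]]] k /andP[k_gt0 le_kb].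
apply/andP; split.
- by apply: le_trans sb_ge0 (nonincreasing_le s_noninc _ _); rewrite ?k_gt0.
- by apply: le_trans (nonincreasing_le s_noninc _ _) s1_le1; rewrite ?k_gt0.
Qed.

Theorem lemma8 (R : realType) (N : nat) (gamma alpha : R) (b : nat)
    (s : nat -> R)
    (hN : (1 <= N)%N) (hg0 : 0 < gamma) (hg1 : gamma <= 1) (ha : 0 < alpha)
    (hb : (0 < b)%N)
    (hs : is_ordered_equilibrium b (lam N gamma alpha) s) :
  1 / 3 <= `| (invmx (Jac b (lam N gamma alpha) s)) (Ordinal hb) (Ordinal hb) |
  /\ (forall i : 'I_b, (invmx (Jac b (lam N gamma alpha) s)) i i < 0).
Proof.
have /andP[l_ge0 l_le1] := lam_ge0_le1 hN hg0 hg1 ha.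
move: (lam N gamma alpha) l_ge0 l_le1 hs => l l_ge0 l_le1 hs.
have s_bounds := ordered_equilibrium_bounds hs.
have c_ge0 k : (0 < k <= b)%N -> 0 <= 2 * l * s k.
  by case/s_bounds/andP => sk_ge0 _; rewrite !mulr_ge0.
have c1_le2 : 2 * l * s 1 <= 2.
  have /andP[s1_ge0 s1_le1] := s_bounds 1%N hb.
  by have := ler_pM l_ge0 s1_ge0 l_le1 s1_le1; lra.
change (Jac b l s) with (tridiag b (fun k => 2 * l * s k)).
rewrite invmx_tridiag //; split=> [|i]; rewrite mxE.
- apply: le_trans (inv_row11_ge c_ge0 hb).
  have c1_ge0 := c_ge0 1%N hb; rewrite div1r lef_pV2 ?posrE; lra.
- by apply: (inv_row_diag_lt0 c_ge0); rewrite ltn_ord.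
Qed.
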